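(* Let $\xi=\eta x.\chi$ be a tidy fixpoint formula with $x\in\mathrm{FV}(\chi)$ and $\xi\notin\mathrm{Clos}(\chi)$, and let $\chi'=\chi[x'/x]$ for a fresh variable $x'$. Then $\chi'$ is tidy, and: (1) the map $\phi\mapsto\phi[\xi/x']$ is a bijection from $\mathrm{Clos}(\chi')$ onto $\mathrm{Clos}(\xi)$. For all $\phi,\psi\in\mathrm{Clos}(\chi')$: (2) if $\phi\neq x'$ then ($\phi\rightarrow_C\psi$ iff $\phi[\xi/x']\rightarrow_C\psi[\xi/x']$), and $L_n(\phi)=L_n(\phi[\xi/x'])$; (3) if $x'\in\mathrm{FV}(\phi)$ then ($\phi\trianglelefteq_f\psi$ iff $\phi[\xi/x']\trianglelefteq_f\psi[\xi/x']$); (4) if $\phi,\psi$ are fixpoint formulas then ($\psi\sqsubseteq_C\phi$ iff $\psi[\xi/x']\sqsubseteq_C\phi[\xi/x']$); (5) if $\phi$ is a fixpoint formula then $h^\downarrow(\phi)=h^\downarrow(\phi[\xi/x'])$; (6) if $(\phi_n)_{n\in\omega}$ is an infinite trace through $\mathrm{Clos}(\chi')$, then $(\phi_n)_{n\in\omega}$ and $(\phi_n[\xi/x'])_{n\in\omega}$ have the same winner.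
   Context: Syntax. Formulas of the modal $\mu$-calculus are taken in negation normal form: $\phi ::= \top \mid \bot \mid p \mid \neg p \mid x \mid \phi\land\phi\mid\phi\lor\phi\mid\Diamond\phi\mid\Box\phi\mid\mu x.\phi\mid\nu x.\phi$, where $p$ ranges over proposition letters and $x$ over an infinite supply of variables (which occur only positively). The formulas $\top,\bot,p,\neg p,x$ are atomic. $\mathrm{FV}(\phi)$ and $\mathrm{BV}(\phi)$ are the sets of free and bound variables of $\phi$; $\phi$ is tidy if $\mathrm{FV}(\phi)\cap\mathrm{BV}(\phi)=\varnothing$. A fixpoint formula is one of the form $\eta x.\chi$ with $\eta\in\{\mu,\nu\}$; it has type $\eta$, where $\mu$ counts as odd and $\nu$ as even parity, and $\bar\eta$ denotes the other operator. $\chi[\xi/x]$ is the result of replacing every free occurrence of $x$ in $\chi$ by $\xi$; $\xi$ is free for $x$ in $\chi$ if no free variable of $\xi$ becomes bound in $\chi[\xi/x]$. A variable is fresh if it occurs in none of the formulas under consideration. Traces and closure. The trace relation $\rightarrow_C$: $\phi_0\odot\phi_1\rightarrow_C\phi_i$ for $\odot\in\{\land,\lor\}$, $i\in\{0,1\}$; $\heartsuit\phi\rightarrow_C\phi$ for $\heartsuit\in\{\Diamond,\Box\}$; $\eta x.\phi\rightarrow_C\phi[\eta x.\phi/x]$; atomic formulas have no successors. $\twoheadrightarrow_C$ is the reflexive transitive closure of $\rightarrow_C$, $\mathrm{Clos}(\phi)=\{\psi\mid\phi\twoheadrightarrow_C\psi\}$ (a finite set), and a trace is a finite or infinite sequence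 of formulas with consecutive members related by $\rightarrow_C$. Write $\phi\equiv_C\psi$ iff $\phi\twoheadrightarrow_C\psi$ and $\psi\twoheadrightarrow_C\phi$; its equivalence classes are (closure) clusters, and $C(\phi)$ is the cluster of $\phi$. Natural labelling: $L_n(\phi)=\phi$ for atomic $\phi$, $L_n(\heartsuit\psi)=\heartsuit$, $L_n(\psi_0\odot\psi_1)=\odot$, $L_n(\eta x.\psi)=\epsilon$. Free subformulas. $\phi\trianglelefteq_f\psi$ iff $\psi=\chi[\phi/y]$ for some formula $\chi$ and variable $y$ with $y\in\mathrm{FV}(\chi)$ and $\phi$ free for $y$ in $\chi$. Closure order. For a formula $\psi$, write $\rho\twoheadrightarrow_C^{\psi}\sigma$ iff there is a trace $\rho=\chi_0\rightarrow_C\cdots\rightarrow_C\chi_n=\sigma$ ($n\ge0$) with $\psi\trianglelefteq_f\chi_i$ for all $i\le n$. For fixpoint formulas $\phi,\psi$: $\phi\sqsubseteq_C\psi$ iff $\psi\twoheadrightarrow_C^{\psi}\phi$; $\phi\sqsubset_C\psi$ iff $\phi\sqsubseteq_C\psi$ and $\psi\not\sqsubseteq_C\phi$. Chains. An alternating $\sqsubset_C$-chain of length $n$ is a sequence $\eta_1x_1.\chi_1,\dots,\eta_nx_n.\chi_n$ of tidy fixpoint formulas with $\eta_ix_i.\chi_i\sqsubset_C\eta_{i+1}x_{i+1}.\chi_{i+1}$ and $\eta_{i+1}=\bar\eta_i$ for all $i<n$; it starts at the first and leads up to the last formula. For a tidy fixpoint formula $\xi$, $h^\uparrow(\xi)$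 (resp. $h^\downarrow(\xi)$) is the maximal length of an alternating $\sqsubset_C$-chain starting at (resp. leading up to) $\xi$. For a cluster $C$, $\mathit{cd}(C)$ is the maximal length of an alternating $\sqsubset_C$-chain inside $C$. Global priority map. For a tidy fixpoint formula $\psi=\eta y.\phi$ let $d=\mathit{cd}(C(\psi))-h^\uparrow(\psi)$ and set $\Omega_g(\psi)=d$ if $d$ has parity $\eta$ and $\Omega_g(\psi)=d+1$ otherwise; $\Omega_g$ is undefined on non-fixpoint formulas. The winner of an infinite trace of tidy formulas is $\exists$ if the largest value of $\Omega_g$ among the fixpoint formulas occurring infinitely often on it is even, and $\forall$ otherwise. *)

From Stdlib Require Import Arith List ZArith Relations ClassicalEpsilon Classical.
Import ListNotations.

Inductive fp := Mu | Nu.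

Definition fp_neg (e : fp) : fp := match e with Mu => Nu | Nu => Mu end.

(* Formulas in negation normal form; proposition letters and variables are nat. *)
Inductive form : Type :=
| FTop | FBot
| FProp (p : nat) | FNProp (p : nat)
| FVar (x : nat)
| FAnd (a b : form) | FOr (a b : form)
| FDia (a : form) | FBox (a : form)
| FFix (e : fp) (x : nat) (a : form).

Fixpoint free_in (x : nat) (f : form) : bool :=
  match f with
  | FVar y => Nat.eqb x y
  | FAnd a b | FOr a b => free_in x a || free_in x b
  | FDia a | FBox a => free_in x a
  | FFix _ y a => negb (Nat.eqb x y) && free_in x a
  | _ => false
  end.

Fixpoint bound_in (x : nat) (f : form) : bool :=
  match f with
  | FAnd a b | FOr a b => bound_in x a || bound_in x b
  | FDia a | FBox a => bound_in x a
  | FFix _ y a => Nat.eqb x y || bound_in x a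
  | _ => false
  end.

Definition occurs (x : nat) (f : form) : bool := free_in x f || bound_in x f.

Definition tidy (f : form) : Prop := forall y, ~ (free_in y f = true /\ bound_in y f = true).

(* subst f y g = f[g/y]: replace every free occurrence of y in f by g (no renaming) *)
Fixpoint subst (f : form) (y : nat) (g : form) : form :=
  match f with
  | FVar z => if Nat.eqb z y then g else FVar z
  | FAnd a b => FAnd (subst a y g) (subst b y g)
  | FOr a b => FOr (subst a y g) (subst b y g)
  | FDia a => FDia (subst a y g)
  | FBox a => FBox (subst a y g)
  | FFix e z a => if Nat.eqb z y then FFix e z a else FFix e z (subst a y g)
  | h => h
  end.

(* g is free for y in f: no free variable of g becomes bound in f[g/y] *)
Fixpoint free_for (g : form) (y : nat) (f : form) : bool :=
  match f with
  | FAnd a b | FOr a b => free_for g y a && free_for g y b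
  | FDia a | FBox a => free_for g y a
  | FFix _ z a =>
      if Nat.eqb z y then true
      else (negb (free_in y a) || negb (free_in z g)) && free_for g y a
  | _ => true
  end.

Definition is_fix (f : form) : Prop := match f with FFix _ _ _ => True | _ => False end.

Inductive step : form -> form -> Prop :=
| st_andl a b : step (FAnd a b) a
| st_andr a b : step (FAnd a b) b
| st_orl a b : step (FOr a b) a
| st_orr a b : step (FOr a b) b
| st_dia a : step (FDia a) a
| st_box a : step (FBox a) a
| st_fix e x a : step (FFix e x a) (subst a x (FFix e x a)).

Definition steps : form -> form -> Prop := clos_refl_trans form step.
Definition Clos (f : form) (g : form) : Prop := steps f g.

Definition clos_equiv (f g : form) : Prop := steps f g /\ steps g f.

Inductive label := LAtom (f : form) | LDia | LBox | LAnd | LOr | LEps.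

Definition Ln (f : form) : label :=
  match f with
  | FDia _ => LDia | FBox _ => LBox
  | FAnd _ _ => LAnd | FOr _ _ => LOr
  | FFix _ _ _ => LEps
  | h => LAtom h
  end.

Definition free_sub (phi psi : form) : Prop :=
  exists chi y, free_in y chi = true /\ free_for phi y chi = true /\ psi = subst chi y phi.

Inductive steps_in (psi : form) : form -> form -> Prop :=
| si_refl r : free_sub psi r -> steps_in psi r r
| si_step r s t : free_sub psi r -> step r s -> steps_in psi s t -> steps_in psi r t.

Definition csub (phi psi : form) : Prop := steps_in psi psi phi.
Definition csub_strict (phi psi : form) : Prop := csub phi psi /\ ~ csub psi phi.

Definition fix_type (f : form) : option fp :=
  match f with FFix e _ _ => Some e | _ => None end.

(* alternating strict chain, listed from bottom to top *)
Fixpoint alt_chain (l : list form) : Prop :=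
  match l with
  | [] => True
  | a :: t =>
      tidy a /\ is_fix a /\
      match t with
      | [] => True
      | b :: _ => csub_strict a b /\
                  fix_type b = option_map fp_neg (fix_type a) /\ alt_chain t
      end
  end.

Definition is_max (P : nat -> Prop) (n : nat) : Prop := P n /\ forall m, P m -> m <= n.
Definition max_of (P : nat -> Prop) : nat := epsilon (inhabits 0) (is_max P).

Definition h_up (xi : form) : nat :=
  max_of (fun n => exists l, alt_chain (xi :: l) /\ length (xi :: l) = n).
Definition h_down (xi : form) : nat :=
  max_of (fun n => exists l, alt_chain (l ++ [xi]) /\ length (l ++ [xi]) = n).
Definition cd_of (psi : form) : nat :=
  max_of (fun n => exists l, alt_chain l /\ Forall (clos_equiv psi) l /\ length l = n).

Definition fp_odd (e : fp) : bool := match e with Mu => true | Nu => false end.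

(* global priority map (only meaningful on fixpoint formulas) *)
Definition Omega_g (psi : form) : Z :=
  match psi with
  | FFix e _ _ =>
      let d := (Z.of_nat (cd_of psi) - Z.of_nat (h_up psi))%Z in
      if Bool.eqb (Z.odd d) (fp_odd e) then d else (d + 1)%Z
  | _ => 0%Z
  end.

Definition inf_often (t : nat -> form) (f : form) : Prop :=
  forall N, exists n, N <= n /\ t n = f.

Inductive player := PExists | PForall.

Definition exists_wins (t : nat -> form) : Prop :=
  exists f, is_fix f /\ inf_often t f /\ Z.even (Omega_g f) = true /\
    forall g, is_fix g -> inf_often t g -> (Omega_g g <= Omega_g f)%Z.

Definition winner (t : nat -> form) : player :=
  if excluded_middle_informative (exists_wins t) then PExists else PForall.

(* The map r |-> r[xi/x'] is studied on Clos chi'.  Two facts drive everything: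
   - it commutes with the trace relation on formulas that bind neither x' nor a free
     variable of xi ([step_subst], [step_subst_inv]), and it preserves and reflects free
     subformulas ([fsub_subst], [fsub_subst_inv]);
   - it is undone by replacing xi with x' ([unsubst_subst]) on formulas that bind no x' and
     do not contain xi as a subformula, hence it is injective there.
   Every member of Clos chi' meets these conditions: it binds only variables of chi, and by
   an abstraction argument ([abstracts]) it is a pattern of a member of Clos chi, which does
   not contain xi since xi is not in Clos chi.  Parts (1)-(4) follow by induction along
   traces; part (5) by mapping alternating chains; part (6) because the winner of a trace is
   decided by the closure-order-greatest fixpoint occurring infinitely often, which is one
   of minimal size ([smallest_fix_is_top]) and is mapped to its counterpart. *)

From Stdlib Require Import Arith List ZArith Relations Lia Bool ClassicalEpsilon Classical
  FunctionalExtensionality PropExtensionality.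
Import ListNotations.

Ltac split_bool :=
  repeat match goal with
  | H : _ || _ = false |- _ => apply orb_false_iff in H as [? ?]
  | H : _ && _ = true |- _ => apply andb_true_iff in H as [? ?]
  | H : negb _ = true |- _ => apply negb_true_iff in H
  end.

Fixpoint size (f : form) : nat :=
  match f with
  | FAnd a b | FOr a b => S (size a + size b)
  | FDia a | FBox a | FFix _ _ a => S (size a)
  | _ => 1
  end.

Lemma size_pos f : 1 <= size f.
Proof. destruct f; simpl; lia. Qed.

Lemma subst_not_free f y g : free_in y f = false -> subst f y g = f.
Proof.
  induction f; simpl; intro H; split_bool; auto.
  - destruct (Nat.eqb_spec x y); subst; auto. rewrite Nat.eqb_refl in H; discriminate.
  - rewrite IHf1, IHf2; auto.
  - rewrite IHf1, IHf2; auto.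
  - rewrite IHf; auto.
  - rewrite IHf; auto.
  - destruct (Nat.eqb_spec x y); auto.
    rewrite IHf; auto. destruct (Nat.eqb_spec y x); [congruence|]. auto.
Qed.

Lemma free_in_subst_inv f y g v : free_in v (subst f y g) = true ->
  (free_in v f = true /\ v <> y) \/ free_in v g = true.
Proof.
  induction f; simpl; intro H; try discriminate.
  - destruct (Nat.eqb_spec x y); subst; auto.
    simpl in H. apply Nat.eqb_eq in H; subst. left; split; auto. apply Nat.eqb_refl.
  - apply orb_true_iff in H as [H|H].
    + destruct (IHf1 H) as [[? ?]|?]; auto. left; rewrite H0; auto.
    + destruct (IHf2 H) as [[? ?]|?]; auto. left; rewrite H0, orb_true_r; auto.
  - apply orb_true_iff in H as [H|H].
    + destruct (IHf1 H) as [[? ?]|?]; auto. left; rewrite H0; auto.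
    + destruct (IHf2 H) as [[? ?]|?]; auto. left; rewrite H0, orb_true_r; auto.
  - auto.
  - auto.
  - destruct (Nat.eqb_spec x y); subst; simpl in H; split_bool.
    + left. split; [rewrite H, H0; auto|]. intros ->. rewrite Nat.eqb_refl in H; discriminate.
    + destruct (IHf H0) as [[? ?]|?]; auto. left. rewrite H, H1. auto.
Qed.

Lemma bound_in_subst_inv f y g v : bound_in v (subst f y g) = true ->
  bound_in v f = true \/ bound_in v g = true.
Proof.
  induction f; simpl; intro H; auto.
  - destruct (Nat.eqb x y); auto.
  - apply orb_true_iff in H as [H|H]; [destruct (IHf1 H) | destruct (IHf2 H)];
      auto; left; rewrite H0, ?orb_true_r; auto.
  - apply orb_true_iff in H as [H|H]; [destruct (IHf1 H) | destruct (IHf2 H)];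
      auto; left; rewrite H0, ?orb_true_r; auto.
  - destruct (Nat.eqb x y); simpl in H; auto.
    apply orb_true_iff in H as [H|H]; [rewrite H; auto|].
    destruct (IHf H); auto. left; rewrite H0, orb_true_r; auto.
Qed.

Lemma free_in_subst_keep f y g v : free_in v f = true -> v <> y ->
  free_in v (subst f y g) = true.
Proof.
  induction f; simpl; intros H Hv; try discriminate; split_bool.
  - apply Nat.eqb_eq in H; subst. destruct (Nat.eqb_spec x y); [congruence|]. apply Nat.eqb_refl.
  - apply orb_true_iff in H as [H|H]; apply orb_true_iff; auto.
  - apply orb_true_iff in H as [H|H]; apply orb_true_iff; auto.
  - auto.
  - auto.
  - destruct (Nat.eqb x y); simpl; rewrite ?H, ?IHf; auto.
Qed.

Lemma free_in_subst_plug C y g v : free_in y C = true -> bound_in v C = false ->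
  free_in v g = true -> free_in v (subst C y g) = true.
Proof.
  induction C; simpl; intros H1 H2 H3; try discriminate; split_bool.
  - apply Nat.eqb_eq in H1; subst. rewrite Nat.eqb_refl; auto.
  - apply orb_true_iff in H1 as [H1|H1]; apply orb_true_iff; auto.
  - apply orb_true_iff in H1 as [H1|H1]; apply orb_true_iff; auto.
  - auto.
  - auto.
  - rewrite Nat.eqb_sym, H1. simpl. rewrite H, IHC; auto.
Qed.

Lemma subst_subst_comm B z r y g : z <> y -> free_in z g = false -> bound_in y B = false ->
  subst (subst B z r) y g = subst (subst B y g) z (subst r y g).
Proof.
  induction B; intros Hz Hg HB; simpl in *; split_bool; try rewrite IHB; try rewrite IHB1, IHB2; auto.
  - destruct (Nat.eqb_spec x z); destruct (Nat.eqb_spec x y); subst; simpl; try congruence.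
    + rewrite Nat.eqb_refl; auto.
    + rewrite Nat.eqb_refl, subst_not_free; auto.
    + destruct (Nat.eqb_spec x z); destruct (Nat.eqb_spec x y); congruence.
  - destruct (Nat.eqb_spec x y); [subst; rewrite Nat.eqb_refl in H; discriminate|].
    destruct (Nat.eqb_spec x z); subst; simpl.
    + rewrite Nat.eqb_refl. destruct (Nat.eqb_spec z y); congruence.
    + destruct (Nat.eqb_spec x y); try congruence. destruct (Nat.eqb_spec x z); try congruence.
      rewrite IHB; auto.
Qed.

Lemma subst_rename C x x' g : free_in x' C = false -> bound_in x' C = false ->
  subst (subst C x (FVar x')) x' g = subst C x g.
Proof.
  induction C; simpl; intros H1 H2; split_bool; try rewrite IHC; try rewrite IHC1, IHC2; auto.
  - destruct (Nat.eqb_spec x0 x); simpl.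
    + rewrite Nat.eqb_refl; auto.
    + rewrite Nat.eqb_sym, H1; auto.
  - rewrite H in H1; simpl in H1. rewrite Nat.eqb_sym in H.
    destruct (Nat.eqb_spec x0 x); simpl; rewrite H; f_equal; auto. apply subst_not_free; auto.
Qed.

Lemma size_subst_le D y g : size D <= size (subst D y g).
Proof.
  induction D; simpl; try lia.
  - destruct (Nat.eqb x y); simpl; auto using size_pos.
  - destruct (Nat.eqb x y); simpl; lia.
Qed.

Lemma size_subst_free D y g : free_in y D = true -> size D + size g <= size (subst D y g) + 1.
Proof.
  induction D; simpl; intro H; try discriminate.
  - apply Nat.eqb_eq in H; subst. rewrite Nat.eqb_refl. lia.
  - pose proof (size_subst_le D1 y g); pose proof (size_subst_le D2 y g).
    apply orb_true_iff in H as [H|H]; [specialize (IHD1 H)|specialize (IHD2 H)]; lia.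
  - pose proof (size_subst_le D1 y g); pose proof (size_subst_le D2 y g).
    apply orb_true_iff in H as [H|H]; [specialize (IHD1 H)|specialize (IHD2 H)]; lia.
  - specialize (IHD H); lia.
  - specialize (IHD H); lia.
  - split_bool. rewrite Nat.eqb_sym, H. simpl. specialize (IHD H0); lia.
Qed.

Lemma step_free a b v : step a b -> free_in v b = true -> free_in v a = true.
Proof.
  intros H Hv; destruct H; simpl; rewrite ?Hv, ?orb_true_r; auto.
  destruct (free_in_subst_inv _ _ _ _ Hv) as [[H1 H2]|H1]; auto.
  simpl. rewrite H1. apply andb_true_iff; split; auto. apply negb_true_iff, Nat.eqb_neq; auto.
Qed.

Lemma step_bound a b v : step a b -> bound_in v b = true -> bound_in v a = true.
Proof.
  intros H Hv; destruct H; simpl; rewrite ?Hv, ?orb_true_r; auto.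
  destruct (bound_in_subst_inv _ _ _ _ Hv) as [H1|H1]; auto. rewrite H1, orb_true_r; auto.
Qed.

Lemma steps_ind_last (P : form -> Prop) a :
  P a -> (forall b c, steps a b -> P b -> step b c -> P c) -> forall b, steps a b -> P b.
Proof.
  intros H0 HS b Hb. apply clos_rt_rtn1 in Hb. induction Hb; auto.
  apply HS with y; auto. apply clos_rtn1_rt; auto.
Qed.

Lemma steps_snoc a b c : steps a b -> step b c -> steps a c.
Proof. intros; eapply rt_trans; [eauto | apply rt_step; auto]. Qed.

Lemma steps_free a b v : steps a b -> free_in v b = true -> free_in v a = true.
Proof. intro H; revert v; pattern b; apply (steps_ind_last _ a); eauto using step_free. Qed.

Lemma steps_bound a b v : steps a b -> bound_in v b = true -> bound_in v a = true.
Proof. intro H; revert v; pattern b; apply (steps_ind_last _ a); eauto using step_bound. Qed.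

Lemma steps_tidy a b : tidy a -> steps a b -> tidy b.
Proof. intros Ht H y [H1 H2]. apply (Ht y); split; eauto using steps_free, steps_bound. Qed.

(* This is the structural form of the free-subformula
   relation; the depth index supports the induction in [fsub_at_reach]. *)
Inductive fsub_at (s : form) : nat -> form -> Prop :=
| fa_here : fsub_at s 0 s
| fa_andl n a b : fsub_at s n a -> fsub_at s (S n) (FAnd a b)
| fa_andr n a b : fsub_at s n b -> fsub_at s (S n) (FAnd a b)
| fa_orl n a b : fsub_at s n a -> fsub_at s (S n) (FOr a b)
| fa_orr n a b : fsub_at s n b -> fsub_at s (S n) (FOr a b)
| fa_dia n a : fsub_at s n a -> fsub_at s (S n) (FDia a)
| fa_box n a : fsub_at s n a -> fsub_at s (S n) (FBox a)
| fa_fix n e z a : fsub_at s n a -> free_in z s = false -> fsub_at s (S n) (FFix e z a).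

Definition fsub (s f : form) : Prop := exists n, fsub_at s n f.

Lemma fsub_refl s : fsub s s.
Proof. exists 0; constructor. Qed.

Lemma fsub_at_free s n f v : fsub_at s n f -> free_in v s = true -> free_in v f = true.
Proof.
  induction 1; intro Hv; simpl; rewrite ?IHfsub_at, ?orb_true_r; auto.
  apply andb_true_iff; split; auto. apply negb_true_iff, Nat.eqb_neq. intros ->; congruence.
Qed.

Lemma fsub_at_size s n f : fsub_at s n f -> size s + n <= size f.
Proof. induction 1; simpl; lia. Qed.

Lemma fsub_size s f : fsub s f -> size s <= size f.
Proof. intros [n H]; apply fsub_at_size in H; lia. Qed.

Lemma fsub_size_eq s f : fsub s f -> size s = size f -> s = f.
Proof. intros [n H] E. destruct H; auto; apply fsub_at_size in H; simpl in E; lia. Qed.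

Lemma fsub_at_atomic s n a : fsub_at s n a ->
  match a with FAnd _ _ | FOr _ _ | FDia _ | FBox _ | FFix _ _ _ => True | _ => s = a end.
Proof. destruct 1; auto. destruct s; auto. Qed.

Lemma fsub_at_inv t n f : fsub_at t n f -> t = f \/
  match f with
  | FAnd a b | FOr a b => fsub t a \/ fsub t b
  | FDia a | FBox a => fsub t a
  | FFix _ z a => fsub t a /\ free_in z t = false
  | _ => False
  end.
Proof. destruct 1; auto; right; try (left; eexists; eauto; fail); try (right; eexists; eauto; fail);
  try split; auto; eexists; eauto.
Qed.

Lemma fsub_var v f : fsub f (FVar v) -> f = FVar v.
Proof. intros [n H]. apply fsub_at_atomic in H; auto. Qed.

Lemma fsub_at_trans a n b m c : fsub_at a n b -> fsub_at b m c -> fsub_at a (n + m) c.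
Proof.
  intros H1 H2; induction H2 as [| | | | | | |k e z d H IH Hz];
    rewrite ?Nat.add_0_r, ?Nat.add_succ_r; auto.
  1-6: solve [apply fa_andl; auto | apply fa_andr; auto | apply fa_orl; auto
            | apply fa_orr; auto | apply fa_dia; auto | apply fa_box; auto].
  apply fa_fix; auto.
  destruct (free_in z a) eqn:E; auto. rewrite (fsub_at_free _ _ _ _ H1 E) in Hz; discriminate.
Qed.

Lemma fsub_trans a b c : fsub a b -> fsub b c -> fsub a c.
Proof. intros [n H1] [m H2]; exists (n + m); eapply fsub_at_trans; eauto. Qed.

Lemma fsub_antisym a b : fsub a b -> fsub b a -> a = b.
Proof.
  intros H1 H2. apply fsub_size_eq; auto. apply fsub_size in H1; apply fsub_size in H2; lia.
Qed.

Lemma fsub_of_free v f : free_in v f = true -> fsub (FVar v) f.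
Proof.
  induction f; simpl; intro H; try discriminate.
  - apply Nat.eqb_eq in H; subst; apply fsub_refl.
  - apply orb_true_iff in H as [H|H]; [destruct (IHf1 H) as [n Hn]|destruct (IHf2 H) as [n Hn]];
      exists (S n); [apply fa_andl | apply fa_andr]; auto.
  - apply orb_true_iff in H as [H|H]; [destruct (IHf1 H) as [n Hn]|destruct (IHf2 H) as [n Hn]];
      exists (S n); [apply fa_orl | apply fa_orr]; auto.
  - destruct (IHf H) as [n Hn]; exists (S n); constructor; auto.
  - destruct (IHf H) as [n Hn]; exists (S n); constructor; auto.
  - split_bool. destruct (IHf H0) as [n Hn]; exists (S n); constructor; auto.
    simpl. rewrite Nat.eqb_sym; auto.
Qed.

Lemma fsub_at_subst s n B z g : fsub_at s n B -> free_in z s = false -> fsub_at s n (subst B z g).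
Proof.
  induction 1; intro Hz; simpl; try (constructor; auto; fail).
  - rewrite subst_not_free; auto. constructor.
  - destruct (Nat.eqb z0 z); constructor; auto.
Qed.

(* Every free subformula lies in the closure: unfold the fixpoints on the path to it. *)
Lemma fsub_at_reach n s f : fsub_at s n f -> steps f s.
Proof.
  revert s f; induction n; intros s f H; inversion H; subst; try apply rt_refl.
  1-6: eapply rt_trans; [apply rt_step | apply IHn; eassumption];
       solve [apply st_andl | apply st_andr | apply st_orl | apply st_orr | apply st_dia
             | apply st_box].
  eapply rt_trans; [apply rt_step, st_fix|]. apply IHn, fsub_at_subst; auto.
Qed.

Lemma fsub_reach s f : fsub s f -> steps f s.
Proof. intros [n H]; eapply fsub_at_reach; eauto. Qed.

Fixpoint max_name (f : form) : nat :=
  match f with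
  | FProp p | FNProp p => p
  | FVar v => v
  | FAnd a b | FOr a b => max (max_name a) (max_name b)
  | FDia a | FBox a => max_name a
  | FFix _ z a => max z (max_name a)
  | _ => 0
  end.

Lemma fresh_not_free y f : max_name f < y -> free_in y f = false.
Proof.
  induction f; simpl; intro H; auto.
  - apply Nat.eqb_neq; lia.
  - rewrite IHf1, IHf2; auto; lia.
  - rewrite IHf1, IHf2; auto; lia.
  - rewrite IHf; auto; lia.
Qed.

Lemma free_for_not_free g y f : free_in y f = false -> free_for g y f = true.
Proof.
  induction f; simpl; intro H; split_bool; rewrite ?IHf1, ?IHf2; auto.
  destruct (Nat.eqb_spec x y); auto.
  destruct (Nat.eqb_spec y x); [congruence|]. simpl in H. rewrite IHf, H; auto.
Qed.

(* The structural relation is the free-subformula relation of the paper: a context with a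
   fresh hole variable witnesses [free_sub], and conversely a context shows the structure. *)
Lemma fsub_at_context s n f y : fsub_at s n f -> max_name f < y -> max_name s < y ->
  exists C, free_in y C = true /\ free_for s y C = true /\ subst C y s = f.
Proof.
  induction 1; simpl; intros Hf Hs.
  - exists (FVar y); simpl; rewrite Nat.eqb_refl; auto.
  - destruct IHfsub_at as [C [? [? ?]]]; try lia. exists (FAnd C b); simpl.
    rewrite H0, H1, H2, free_for_not_free, subst_not_free; auto; apply fresh_not_free; lia.
  - destruct IHfsub_at as [C [? [? ?]]]; try lia. exists (FAnd a C); simpl.
    rewrite H0, H1, H2, free_for_not_free, subst_not_free, orb_true_r; auto;
      apply fresh_not_free; lia.
  - destruct IHfsub_at as [C [? [? ?]]]; try lia. exists (FOr C b); simpl.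
    rewrite H0, H1, H2, free_for_not_free, subst_not_free; auto; apply fresh_not_free; lia.
  - destruct IHfsub_at as [C [? [? ?]]]; try lia. exists (FOr a C); simpl.
    rewrite H0, H1, H2, free_for_not_free, subst_not_free, orb_true_r; auto;
      apply fresh_not_free; lia.
  - destruct IHfsub_at as [C [? [? ?]]]; try lia. exists (FDia C); simpl. rewrite H0, H1, H2; auto.
  - destruct IHfsub_at as [C [? [? ?]]]; try lia. exists (FBox C); simpl. rewrite H0, H1, H2; auto.
  - destruct IHfsub_at as [C [? [? ?]]]; try lia. exists (FFix e z C); simpl.
    assert (Hzy : (z =? y) = false) by (apply Nat.eqb_neq; lia).
    rewrite Hzy, Nat.eqb_sym, Hzy; simpl. rewrite H1, H2, H3, H0, orb_true_r; auto.
Qed.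

Lemma free_sub_fsub s f : free_sub s f -> fsub s f.
Proof.
  intros [C [y [H1 [H2 ->]]]]. revert H1 H2.
  induction C; simpl; intros H1 H2; try discriminate; split_bool.
  - apply Nat.eqb_eq in H1; subst. rewrite Nat.eqb_refl. apply fsub_refl.
  - apply orb_true_iff in H1 as [H1|H1]; [destruct (IHC1 H1 H) as [n Hn]|destruct (IHC2 H1 H0) as [n Hn]];
      exists (S n); [apply fa_andl|apply fa_andr]; auto.
  - apply orb_true_iff in H1 as [H1|H1]; [destruct (IHC1 H1 H) as [n Hn]|destruct (IHC2 H1 H0) as [n Hn]];
      exists (S n); [apply fa_orl|apply fa_orr]; auto.
  - destruct (IHC H1 H2) as [n Hn]; exists (S n); constructor; auto.
  - destruct (IHC H1 H2) as [n Hn]; exists (S n); constructor; auto.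
  - destruct (Nat.eqb_spec x y); subst; [rewrite Nat.eqb_refl in H; discriminate|].
    rewrite H0 in H2; simpl in H2. split_bool.
    destruct (IHC H0 H2) as [m Hm]. exists (S m). constructor; auto.
Qed.

Lemma free_sub_iff s f : free_sub s f <-> fsub s f.
Proof.
  split; [apply free_sub_fsub|]. intros [n H].
  destruct (fsub_at_context s n f (S (max_name f + max_name s)) H) as [C [H1 [H2 H3]]]; try lia.
  exists C, (S (max_name f + max_name s)); auto.
Qed.

Inductive sub (s : form) : form -> Prop :=
| sub_refl : sub s s
| sub_andl a b : sub s a -> sub s (FAnd a b)
| sub_andr a b : sub s b -> sub s (FAnd a b)
| sub_orl a b : sub s a -> sub s (FOr a b)
| sub_orr a b : sub s b -> sub s (FOr a b)
| sub_dia a : sub s a -> sub s (FDia a)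
| sub_box a : sub s a -> sub s (FBox a)
| sub_fix e z a : sub s a -> sub s (FFix e z a).

Lemma sub_trans a b c : sub a b -> sub b c -> sub a c.
Proof.
  intros H1 H2; induction H2; auto;
    [apply sub_andl|apply sub_andr|apply sub_orl|apply sub_orr|apply sub_dia|apply sub_box|apply sub_fix];
    auto.
Qed.

Lemma sub_bound s a v : sub s a -> bound_in v s = true -> bound_in v a = true.
Proof. induction 1; intro Hv; simpl; rewrite ?IHsub, ?orb_true_r; auto. Qed.

Lemma sub_fsub s a : sub s a -> (forall z, bound_in z a = true -> free_in z s = false) -> fsub s a.
Proof.
  induction 1; intro HB; simpl in HB;
    try (destruct IHsub as [n Hn]; [intros v Hv; apply HB; rewrite Hv, ?orb_true_r; auto|]).
  - apply fsub_refl.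
  - exists (S n); apply fa_andl; auto.
  - exists (S n); apply fa_andr; auto.
  - exists (S n); apply fa_orl; auto.
  - exists (S n); apply fa_orr; auto.
  - exists (S n); apply fa_dia; auto.
  - exists (S n); apply fa_box; auto.
  - exists (S n); apply fa_fix; auto. apply HB. rewrite Nat.eqb_refl; auto.
Qed.

Lemma sub_subst_free D y g : free_in y D = true -> sub g (subst D y g).
Proof.
  induction D; simpl; intro H; try discriminate; split_bool.
  - apply Nat.eqb_eq in H; subst; rewrite Nat.eqb_refl; constructor.
  - apply orb_true_iff in H as [H|H]; [apply sub_andl|apply sub_andr]; auto.
  - apply orb_true_iff in H as [H|H]; [apply sub_orl|apply sub_orr]; auto.
  - constructor; auto.
  - constructor; auto.
  - rewrite Nat.eqb_sym, H. constructor; auto.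
Qed.

(* Renaming x to x' in chi abstracts chi, and this is preserved along traces, which shows
   that the closure of chi[x'/x] is a pattern of the closure of chi. *)
Inductive abstracts (x' : nat) : form -> form -> Prop :=
| ab_var a : abstracts x' a (FVar x')
| ab_top : abstracts x' FTop FTop
| ab_bot : abstracts x' FBot FBot
| ab_prop p : abstracts x' (FProp p) (FProp p)
| ab_nprop p : abstracts x' (FNProp p) (FNProp p)
| ab_other v : abstracts x' (FVar v) (FVar v)
| ab_and a b c d : abstracts x' a c -> abstracts x' b d -> abstracts x' (FAnd a b) (FAnd c d)
| ab_or a b c d : abstracts x' a c -> abstracts x' b d -> abstracts x' (FOr a b) (FOr c d)
| ab_dia a c : abstracts x' a c -> abstracts x' (FDia a) (FDia c)
| ab_box a c : abstracts x' a c -> abstracts x' (FBox a) (FBox c)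
| ab_fix e z a c : abstracts x' a c -> abstracts x' (FFix e z a) (FFix e z c).

Lemma abstracts_refl x' a : abstracts x' a a.
Proof. induction a; constructor; auto. Qed.

Lemma abstracts_rename x' x A : abstracts x' A (subst A x (FVar x')).
Proof.
  induction A; simpl; try (constructor; auto; fail).
  - destruct (Nat.eqb x0 x); constructor.
  - destruct (Nat.eqb x0 x); constructor; auto. apply abstracts_refl.
Qed.

Lemma abstracts_subst x' A B z a r : abstracts x' A B -> z <> x' -> abstracts x' a r ->
  abstracts x' (subst A z a) (subst B z r).
Proof.
  induction 1; intros Hz Har; simpl; try (constructor; auto; fail).
  - destruct (Nat.eqb_spec x' z); [congruence|constructor].
  - destruct (Nat.eqb v z); auto; constructor.
  - destruct (Nat.eqb z0 z); constructor; auto.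
Qed.

Lemma abstracts_step x' a r r2 : abstracts x' a r -> bound_in x' r = false -> step r r2 ->
  exists a2, step a a2 /\ abstracts x' a2 r2.
Proof.
  intros HR HB HS. destruct HS; inversion HR; subst; simpl in HB.
  all: try (eexists; split; [constructor|auto]; fail).
  eexists; split; [constructor|].
  apply abstracts_subst; auto. intros ->. rewrite Nat.eqb_refl in HB; discriminate.
Qed.

Lemma abstracts_eq x' a r : abstracts x' a r -> free_in x' r = false -> bound_in x' r = false -> a = r.
Proof.
  induction 1; simpl; intros HF HB; split_bool; f_equal; auto.
  - rewrite Nat.eqb_refl in HF; discriminate.
  - rewrite H0 in HF; auto.
Qed.

Lemma abstracts_sub x' a r s : abstracts x' a r -> sub s r -> free_in x' s = false ->
  bound_in x' s = false -> sub s a.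
Proof.
  intros HR HS HF HB. revert a HR. induction HS; intros a' HR.
  1: rewrite (abstracts_eq _ _ _ HR HF HB); constructor.
  all: inversion HR; subst;
    solve [apply sub_andl; auto | apply sub_andr; auto | apply sub_orl; auto | apply sub_orr; auto
          | apply sub_dia; auto | apply sub_box; auto | apply sub_fix; auto].
Qed.

Definition no_capture (xi r : form) : Prop := forall z, bound_in z r = true -> free_in z xi = false.

(* x' is not bound in r and xi is not a subformula of r: the formulas on which substituting
   xi for x' can be undone. *)
Definition admissible (x' : nat) (xi r : form) : Prop := bound_in x' r = false /\ ~ sub xi r.

Lemma admissible_sub x' xi a b : sub a b -> admissible x' xi b -> admissible x' xi a.
Proof.
  intros Hab [HB HS]. split.
  - destruct (bound_in x' a) eqn:E; auto. rewrite (sub_bound _ _ _ Hab E) in HB; discriminate.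
  - intro H. apply HS. eapply sub_trans; eauto.
Qed.

Lemma isvar_dec b x' : {b = FVar x'} + {b <> FVar x'}.
Proof.
  destruct b; try (right; discriminate).
  destruct (Nat.eq_dec x x'); [left; subst; auto|right; congruence].
Qed.

Lemma form_eq_dec (a b : form) : {a = b} + {a <> b}.
Proof. decide equality; try apply Nat.eq_dec. decide equality. Qed.

Section Transfer.
Variables (x' : nat) (xi : form).

Lemma step_subst r r2 : step r r2 -> bound_in x' r = false -> no_capture xi r ->
  step (subst r x' xi) (subst r2 x' xi).
Proof.
  intros HS HB HC. destruct HS; simpl; try constructor.
  simpl in HB. split_bool. destruct (Nat.eqb_spec x x'); [subst; rewrite Nat.eqb_refl in H; discriminate|].
  rewrite subst_subst_comm; auto. simpl. destruct (Nat.eqb_spec x x'); [congruence|]. constructor.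
  apply HC. simpl. rewrite Nat.eqb_refl; auto.
Qed.

Lemma step_subst_inv r s : step (subst r x' xi) s -> r <> FVar x' -> bound_in x' r = false ->
  no_capture xi r -> exists q, step r q /\ s = subst q x' xi.
Proof.
  intros HS Hr HB HC. destruct r; simpl in HS; try (inversion HS; fail).
  - destruct (Nat.eqb_spec x x'); subst; [congruence|inversion HS].
  - inversion HS; subst; eexists; split; [apply st_andl|auto|apply st_andr|auto].
  - inversion HS; subst; eexists; split; [apply st_orl|auto|apply st_orr|auto].
  - inversion HS; subst; eexists; split; [apply st_dia|auto].
  - inversion HS; subst; eexists; split; [apply st_box|auto].
  - simpl in HB. split_bool. destruct (Nat.eqb_spec x x'); [subst; rewrite Nat.eqb_refl in H; discriminate|].
    inversion HS; subst. exists (subst r x (FFix e x r)); split; [constructor|].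
    rewrite (subst_subst_comm r x (FFix e x r) x' xi); auto.
    simpl. destruct (Nat.eqb_spec x x'); [congruence|]. auto.
    apply HC. simpl. rewrite Nat.eqb_refl; auto.
Qed.

Lemma subst_is_xi b : ~ sub xi b -> subst b x' xi = xi -> b = FVar x'.
Proof.
  intros HS E. destruct (free_in x' b) eqn:F.
  - pose proof (size_subst_free _ _ xi F) as Hs. rewrite E in Hs.
    destruct b; simpl in *; try discriminate; try (pose proof (size_pos b); lia);
      try (pose proof (size_pos b1); pose proof (size_pos b2); lia).
    apply Nat.eqb_eq in F; subst; auto.
  - rewrite subst_not_free in E; auto. subst. exfalso; apply HS; constructor.
Qed.

(* Replacing every occurrence of xi by x' undoes the substitution on admissible formulas;
   in particular the substitution is injective there. *)
Fixpoint unsubst (r : form) : form :=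
  if form_eq_dec r xi then FVar x' else
  match r with
  | FAnd a b => FAnd (unsubst a) (unsubst b)
  | FOr a b => FOr (unsubst a) (unsubst b)
  | FDia a => FDia (unsubst a)
  | FBox a => FBox (unsubst a)
  | FFix e z a => FFix e z (unsubst a)
  | h => h
  end.

Lemma unsubst_xi r : r = xi -> unsubst r = FVar x'.
Proof. intro E; destruct r; simpl; destruct (form_eq_dec _ xi); congruence. Qed.

Lemma unsubst_subst a : admissible x' xi a -> unsubst (subst a x' xi) = a.
Proof.
  induction a; intros Ha;
    match goal with |- unsubst ?t = _ => destruct (form_eq_dec t xi) as [E|NE] end.
  all: try (rewrite (unsubst_xi _ E); symmetry; apply subst_is_xi; [apply (proj2 Ha)|auto]; fail).
  all: simpl in NE |- *.
  1-4: destruct (form_eq_dec _ xi); congruence.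
  -
    destruct (Nat.eqb_spec x x'); [congruence|]. simpl.
    destruct (form_eq_dec (FVar x) xi); congruence.
  - destruct (form_eq_dec _ xi); [congruence|].
    rewrite IHa1, IHa2; auto; eapply admissible_sub; eauto; [apply sub_andr|apply sub_andl]; constructor.
  - destruct (form_eq_dec _ xi); [congruence|].
    rewrite IHa1, IHa2; auto; eapply admissible_sub; eauto; [apply sub_orr|apply sub_orl]; constructor.
  - destruct (form_eq_dec _ xi); [congruence|].
    rewrite IHa; auto. eapply admissible_sub; eauto. repeat constructor.
  - destruct (form_eq_dec _ xi); [congruence|].
    rewrite IHa; auto. eapply admissible_sub; eauto. repeat constructor.
  - (* a fixpoint; its variable is not x' as x' is not bound in a *)
    destruct (Nat.eqb_spec x x');
      [subst; destruct Ha as [HB _]; simpl in HB; rewrite Nat.eqb_refl in HB; discriminate|].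
    simpl. destruct (form_eq_dec _ xi); [congruence|].
    rewrite IHa; auto. eapply admissible_sub; eauto. repeat constructor.
Qed.

Lemma subst_inj a b : admissible x' xi a -> admissible x' xi b ->
  subst a x' xi = subst b x' xi -> a = b.
Proof.
  intros Ha Hb E. rewrite <- (unsubst_subst a Ha), <- (unsubst_subst b Hb), E; auto.
Qed.

Lemma no_capture_sub a b : sub a b -> no_capture xi b -> no_capture xi a.
Proof. intros Hab HC z Hz. apply HC. eapply sub_bound; eauto. Qed.

Lemma fsub_subst phi n psi : fsub_at phi n psi -> bound_in x' psi = false -> no_capture xi psi ->
  fsub (subst phi x' xi) (subst psi x' xi).
Proof.
  induction 1 as [|n a b H IH|n a b H IH|n a b H IH|n a b H IH|n a H IH|n a H IH|n e z a H IH Hz];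
    intros HB HC; simpl in HB; split_bool;
    try (destruct IH as [m Hm];
         [auto | refine (no_capture_sub _ _ _ HC);
                 solve [apply sub_andl, sub_refl | apply sub_andr, sub_refl | apply sub_orl, sub_refl
                       | apply sub_orr, sub_refl | repeat constructor] |]).
  - apply fsub_refl.
  - exists (S m); simpl; apply fa_andl; auto.
  - exists (S m); simpl; apply fa_andr; auto.
  - exists (S m); simpl; apply fa_orl; auto.
  - exists (S m); simpl; apply fa_orr; auto.
  - exists (S m); simpl; apply fa_dia; auto.
  - exists (S m); simpl; apply fa_box; auto.
  - exists (S m); simpl. rewrite Nat.eqb_sym, H0. apply fa_fix; auto.
    destruct (free_in z (subst phi x' xi)) eqn:E; auto.
    destruct (free_in_subst_inv _ _ _ _ E) as [[H3 _]|H3]; [congruence|].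
    rewrite (HC z) in H3; auto. simpl; rewrite Nat.eqb_refl; auto.
Qed.

Lemma fsub_subst_inv phi psi : admissible x' xi phi -> free_in x' phi = true ->
  admissible x' xi psi -> fsub (subst phi x' xi) (subst psi x' xi) -> fsub phi psi.
Proof.
  intros Hphi Fphi.
  assert (Here : forall r, admissible x' xi r -> subst phi x' xi = subst r x' xi -> fsub phi r)
    by (intros r Hr E; rewrite (subst_inj phi r Hphi Hr E); apply fsub_refl).
  induction psi; intros Hpsi [n H]; simpl in H.
  1-4: apply fsub_at_atomic in H; auto.
  - destruct (Nat.eqb_spec x x') as [->|Hx].
    + (* psi = x' is mapped to xi; only phi = x' can then be a free subformula *)
      assert (E : subst phi x' xi = xi).
      { apply fsub_size_eq; [exists n; auto|].
        pose proof (size_subst_free _ _ xi Fphi). pose proof (size_pos phi).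
        pose proof (fsub_at_size _ _ _ H). lia. }
      apply Here; auto. simpl. rewrite Nat.eqb_refl; auto.
    + apply fsub_at_atomic in H. apply Here; auto. simpl. destruct (Nat.eqb_spec x x'); congruence.
  - assert (H1 : admissible x' xi psi1) by (refine (admissible_sub _ _ _ _ _ Hpsi); apply sub_andl, sub_refl).
    assert (H2 : admissible x' xi psi2) by (refine (admissible_sub _ _ _ _ _ Hpsi); apply sub_andr, sub_refl).
    destruct (fsub_at_inv _ _ _ H) as [E|[Ha|Hb]]; auto.
    + destruct (IHpsi1 H1 Ha) as [m Hm]; exists (S m); apply fa_andl; auto.
    + destruct (IHpsi2 H2 Hb) as [m Hm]; exists (S m); apply fa_andr; auto.
  - assert (H1 : admissible x' xi psi1) by (refine (admissible_sub _ _ _ _ _ Hpsi); apply sub_orl, sub_refl).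
    assert (H2 : admissible x' xi psi2) by (refine (admissible_sub _ _ _ _ _ Hpsi); apply sub_orr, sub_refl).
    destruct (fsub_at_inv _ _ _ H) as [E|[Ha|Hb]]; auto.
    + destruct (IHpsi1 H1 Ha) as [m Hm]; exists (S m); apply fa_orl; auto.
    + destruct (IHpsi2 H2 Hb) as [m Hm]; exists (S m); apply fa_orr; auto.
  - assert (H1 : admissible x' xi psi) by (refine (admissible_sub _ _ _ _ _ Hpsi); repeat constructor).
    destruct (fsub_at_inv _ _ _ H) as [E|Ha]; auto.
    destruct (IHpsi H1 Ha) as [m Hm]; exists (S m); apply fa_dia; auto.
  - assert (H1 : admissible x' xi psi) by (refine (admissible_sub _ _ _ _ _ Hpsi); repeat constructor).
    destruct (fsub_at_inv _ _ _ H) as [E|Ha]; auto.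
    destruct (IHpsi H1 Ha) as [m Hm]; exists (S m); apply fa_box; auto.
  - assert (H1 : admissible x' xi psi) by (refine (admissible_sub _ _ _ _ _ Hpsi); repeat constructor).
    assert (Hx : (x =? x') = false).
    { destruct Hpsi as [HB _]. simpl in HB. split_bool. rewrite Nat.eqb_sym; auto. }
    rewrite Hx in H. destruct (fsub_at_inv _ _ _ H) as [E|[Ha Hz]].
    + apply Here; auto. simpl. rewrite Hx. auto.
    + destruct (IHpsi H1 Ha) as [m Hm]; exists (S m); apply fa_fix; auto.
      destruct (free_in x phi) eqn:E; auto.
      assert (free_in x (subst phi x' xi) = true) by (apply free_in_subst_keep; auto; apply Nat.eqb_neq; auto).
      congruence.
Qed.

Lemma Ln_subst phi : phi <> FVar x' -> Ln phi = Ln (subst phi x' xi).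
Proof.
  intro Hn. destruct phi as [| | | |v| | | | |ee v a]; simpl; auto.
  - destruct (Nat.eqb_spec v x'); subst; auto; congruence.
  - destruct (Nat.eqb v x'); auto.
Qed.

End Transfer.

Lemma steps_in_steps p a b : steps_in p a b -> steps a b.
Proof. induction 1; [apply rt_refl|]. eapply rt_trans; [apply rt_step|]; eauto. Qed.

Lemma steps_in_last p a b : steps_in p a b -> free_sub p b.
Proof. induction 1; auto. Qed.

Lemma alt_chain_tail a l : alt_chain (a :: l) -> alt_chain l.
Proof. simpl. destruct l; simpl; tauto. Qed.

Lemma chain_reach l a : alt_chain (l ++ [a]) -> Forall (steps a) (l ++ [a]).
Proof.
  induction l as [|c l IH]; intro H; simpl.
  - constructor; [apply rt_refl|constructor].
  - pose proof (IH (alt_chain_tail _ _ H)) as Ht. constructor; auto.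
    destruct (l ++ [a]) as [|d l'] eqn:E; [destruct l; discriminate|].
    simpl in H; rewrite E in H. destruct H as [_ [_ [[Hcs _] _]]].
    inversion Ht; subst. eapply rt_trans; [eauto | apply steps_in_steps in Hcs; auto].
Qed.

Lemma Forall_preimage {A B} (f : A -> B) (P : A -> Prop) l :
  Forall (fun b => exists a, P a /\ f a = b) l -> exists la, Forall P la /\ map f la = l.
Proof.
  induction 1 as [|b l [a [Ha <-]] _ [la [Hla <-]]]; [exists []; auto|].
  exists (a :: la); split; auto.
Qed.

Lemma subst_fix x' xi q : is_fix q -> is_fix (subst q x' xi) /\ fix_type (subst q x' xi) = fix_type q.
Proof. destruct q; simpl; try contradiction. destruct (Nat.eqb x x'); simpl; auto. Qed.

Lemma subst_fix_inv x' xi q : q <> FVar x' -> is_fix (subst q x' xi) -> is_fix q.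
Proof.
  intros Hn Hf; destruct q; simpl in *; auto.
  destruct (Nat.eqb_spec x x'); subst; [congruence|simpl in Hf; contradiction].
Qed.

Lemma alt_chain_fix l : alt_chain l -> Forall is_fix l.
Proof.
  induction l as [|a l IH]; intro H; constructor.
  - simpl in H; tauto.
  - apply IH. eapply alt_chain_tail; eauto.
Qed.

Lemma steps_in_app p r s t : steps_in p r s -> steps_in p s t -> steps_in p r t.
Proof. induction 1; intro Hn; auto. eapply si_step; eauto. Qed.

Lemma steps_in_mono p q r s : steps_in p r s -> fsub q p -> steps_in q r s.
Proof.
  induction 1; intro Hq; [constructor | eapply si_step; eauto];
    apply free_sub_iff; eapply fsub_trans; eauto; apply free_sub_iff; auto.
Qed.

Lemma csub_fsub a b : csub a b -> fsub b a.
Proof. intro H. apply free_sub_iff. eapply steps_in_last; eauto. Qed.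

Lemma csub_trans a b c : csub a b -> csub b c -> csub a c.
Proof.
  unfold csub; intros H1 H2. eapply steps_in_app; eauto. eapply steps_in_mono; eauto.
  apply csub_fsub; auto.
Qed.

Lemma csub_antisym a b : csub a b -> csub b a -> a = b.
Proof. intros H1 H2. apply fsub_antisym; apply csub_fsub; auto. Qed.

Lemma max_exists_bounded (P : nat -> Prop) B : (exists n, P n) -> (forall n, P n -> n <= B) ->
  exists m, is_max P m.
Proof.
  revert P; induction B; intros P [n Hn] HB.
  - exists 0. assert (n = 0) by (specialize (HB n Hn); lia). subst.
    split; [auto|intros m Hm; specialize (HB m Hm); lia].
  - destruct (classic (P (S B))) as [HP|HP].
    + exists (S B); split; auto.
    + apply IHB. exists n; auto.
      intros m Hm. specialize (HB m Hm). destruct (Nat.eq_dec m (S B)); subst; [contradiction|lia].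
Qed.

Lemma max_of_spec (P : nat -> Prop) B : (exists n, P n) -> (forall n, P n -> n <= B) ->
  is_max P (max_of P).
Proof. intros H1 H2. unfold max_of. apply epsilon_spec. eapply max_exists_bounded; eauto. Qed.

(* A strict chain strictly decreases in size, so its length is bounded by the size of its bottom. *)
Lemma chain_length a l : alt_chain (a :: l) -> length (a :: l) <= size a.
Proof.
  revert a. induction l as [|b l IH]; intros a H.
  - simpl. apply size_pos.
  - specialize (IH b (alt_chain_tail _ _ H)).
    simpl in H. destruct H as [_ [_ [[H1 H2] _]]].
    assert (a <> b) by (intros ->; apply H2; exact H1).
    pose proof (csub_fsub _ _ H1) as Hf.
    assert (size b <> size a) by (intro E; apply H; symmetry; apply fsub_size_eq; auto).
    pose proof (fsub_size _ _ Hf). simpl in *. lia.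
Qed.

Lemma h_up_spec t : tidy t -> is_fix t ->
  is_max (fun n => exists l, alt_chain (t :: l) /\ length (t :: l) = n) (h_up t).
Proof.
  intros T F. apply (max_of_spec _ (size t)).
  - exists 1, []. simpl; auto.
  - intros n [l [Hl <-]]. apply chain_length; auto.
Qed.

Lemma cd_of_equiv a b : clos_equiv a b -> cd_of a = cd_of b.
Proof.
  intros [H1 H2]. unfold cd_of. f_equal. apply functional_extensionality; intro n.
  apply propositional_extensionality.
  split; intros [l [Hl [HF Hn]]]; exists l; repeat split; auto;
    rewrite Forall_forall in *; intros c Hc; destruct (HF c Hc); split; eapply rt_trans; eauto.
Qed.

Definition parity_adjust (e : fp) (d : Z) : Z :=
  if Bool.eqb (Z.odd d) (fp_odd e) then d else (d + 1)%Z.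

Lemma Omega_unfold e z a : Omega_g (FFix e z a) =
  parity_adjust e (Z.of_nat (cd_of (FFix e z a)) - Z.of_nat (h_up (FFix e z a)))%Z.
Proof. reflexivity. Qed.

Lemma parity_adjust_bounds e d : (d <= parity_adjust e d <= d + 1)%Z.
Proof. unfold parity_adjust. destruct (Bool.eqb _ _); lia. Qed.

Lemma parity_adjust_odd e d : Z.odd (parity_adjust e d) = fp_odd e.
Proof.
  unfold parity_adjust. destruct (Bool.eqb (Z.odd d) (fp_odd e)) eqn:E.
  - apply Bool.eqb_prop; auto.
  - rewrite Z.odd_add. simpl. destruct (Z.odd d), (fp_odd e); simpl in *; congruence.
Qed.

Lemma parity_adjust_mono e d1 d2 : (d1 <= d2)%Z -> (parity_adjust e d1 <= parity_adjust e d2)%Z.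
Proof.
  intro H. destruct (Z.eq_dec d1 d2); [subst; lia|].
  pose proof (parity_adjust_bounds e d1); pose proof (parity_adjust_bounds e d2); lia.
Qed.

Lemma Omega_even f : is_fix f -> (Z.even (Omega_g f) = true <-> fix_type f = Some Nu).
Proof.
  destruct f; try contradiction. intros _. rewrite Omega_unfold, <- Z.negb_odd, parity_adjust_odd.
  destruct e; simpl; split; intro; congruence.
Qed.

(* Within a cluster, Omega_g is monotone for the closure order: a chain starting above s
   extends to one starting at s (with one more element if the types differ). *)
Lemma Omega_mono s t : tidy s -> tidy t -> is_fix s -> is_fix t -> csub s t -> clos_equiv s t ->
  (Omega_g s <= Omega_g t)%Z.
Proof.
  intros Ts Tt Fs Ft Hst Heq.
  destruct (classic (s = t)) as [->|Hne]; [lia|].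
  assert (Hns : ~ csub t s) by (intro H; apply Hne; apply csub_antisym; auto).
  destruct (h_up_spec t Tt Ft) as [[l [Hl Hlen]] _].
  destruct (h_up_spec s Ts Fs) as [_ Hmax].
  pose proof (cd_of_equiv s t Heq) as Hcd.
  destruct s as [| | | | | | | | |es zs as_]; try contradiction.
  destruct t as [| | | | | | | | |et zt at_]; try contradiction.
  rewrite !Omega_unfold, Hcd.
  destruct (classic (es = et)) as [<-|Hdiff].
  - assert (Hge : h_up (FFix es zt at_) <= h_up (FFix es zs as_)).
    { apply Hmax. destruct l as [|b l'].
      - exists []. simpl in *. split; auto.
      - exists (b :: l'). split; [|simpl in *; lia].
        simpl in Hl. destruct Hl as [_ [_ [[H1 H2] [H3 H4]]]].
        simpl. split; auto. split; auto. split; [split|split; auto].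
        + eapply csub_trans; eauto.
        + intro H. apply H2. eapply csub_trans; eauto. }
    apply parity_adjust_mono. lia.
  - assert (Hge : S (h_up (FFix et zt at_)) <= h_up (FFix es zs as_)).
    { apply Hmax. exists (FFix et zt at_ :: l). split; [|simpl in *; lia].
      simpl. split; auto. split; auto. split; [split; auto|split].
      + simpl. destruct es, et; simpl; congruence.
      + exact Hl. }
    pose proof (parity_adjust_bounds es
      (Z.of_nat (cd_of (FFix et zt at_)) - Z.of_nat (h_up (FFix es zs as_)))).
    pose proof (parity_adjust_bounds et
      (Z.of_nat (cd_of (FFix et zt at_)) - Z.of_nat (h_up (FFix et zt at_)))).
    lia.
Qed.

Definition trace (u : nat -> form) : Prop := forall n, step (u n) (u (S n)).

Lemma trace_steps u : trace u -> forall i j, i <= j -> steps (u i) (u j).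
Proof. intros Hu i j H. induction H; [apply rt_refl | eapply steps_snoc; eauto]. Qed.

Lemma inf_often_equiv u a b : trace u -> inf_often u a -> inf_often u b -> clos_equiv a b.
Proof.
  intros Hu Ha Hb. destruct (Ha 0) as [i [_ Hi]]. destruct (Hb i) as [j [Hij Hj]].
  destruct (Ha j) as [k [Hjk Hk]].
  split; [rewrite <- Hi, <- Hj | rewrite <- Hj, <- Hk]; apply trace_steps; auto.
Qed.

(* The winner is determined by a closure-order greatest fixpoint occurring infinitely often:
   it has the largest priority, and its priority is even iff it is a nu-formula. *)
Lemma exists_wins_top u tau : trace u -> (forall n, tidy (u n)) -> is_fix tau -> inf_often u tau ->
  (forall s, is_fix s -> inf_often u s -> csub s tau) ->
  (exists_wins u <-> fix_type tau = Some Nu).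
Proof.
  intros Hu Ht Ftau Itau Htop.
  assert (Tidy : forall f, inf_often u f -> tidy f) by (intros f Hf; destruct (Hf 0) as [n [_ <-]]; auto).
  assert (Hle : forall g, is_fix g -> inf_often u g -> (Omega_g g <= Omega_g tau)%Z)
    by (intros g Fg Ig; apply Omega_mono; auto; eapply inf_often_equiv; eauto).
  split.
  - intros [f [Ff [If [Ef Mf]]]]. apply Omega_even; auto.
    replace (Omega_g tau) with (Omega_g f); auto.
    specialize (Mf tau Ftau Itau). specialize (Hle f Ff If). lia.
  - intro H. exists tau. repeat split; auto. apply Omega_even; auto.
Qed.

Lemma max_name_subst B y g : max_name (subst B y g) <= max (max_name B) (max_name g).
Proof.
  induction B; simpl; try lia.
  - destruct (Nat.eqb x y); simpl; lia.
  - destruct (Nat.eqb x y); simpl; lia.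
Qed.

Lemma max_name_steps a b : steps a b -> max_name b <= max_name a.
Proof.
  induction 1 as [a b Hs| |a b c _ IH1 _ IH2]; [|lia|lia].
  destruct Hs; simpl; try lia. pose proof (max_name_subst a x (FFix e x a)). simpl in *. lia.
Qed.

Fixpoint enum (k M : nat) : list form :=
  match k with
  | 0 => []
  | S k' => let L := enum k' M in
      [FTop; FBot] ++ map FProp (seq 0 (S M)) ++ map FNProp (seq 0 (S M)) ++ map FVar (seq 0 (S M)) ++
      flat_map (fun a => map (FAnd a) L) L ++ flat_map (fun a => map (FOr a) L) L ++
      map FDia L ++ map FBox L ++
      flat_map (fun z => map (FFix Mu z) L ++ map (FFix Nu z) L) (seq 0 (S M))
  end.

(* Completeness of the enumeration: bounded sets of formulas are finite. *)
Lemma enum_complete M f k : size f <= k -> max_name f <= M -> In f (enum k M).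
Proof.
  assert (Hseq : forall v, v <= M -> In v (seq 0 (S M))) by (intros; apply in_seq; lia).
  revert k; induction f; intros k Hk Hb; destruct k as [|k]; try (pose proof (size_pos FTop); simpl in *; lia);
    simpl in Hb; cbn [enum]; rewrite !in_app_iff; simpl in Hk.
  - simpl; auto.
  - simpl; auto.
  - right; left. apply in_map, Hseq; auto.
  - right; right; left. apply in_map, Hseq; auto.
  - right; right; right; left. apply in_map, Hseq; auto.
  - do 4 right; left. apply in_flat_map. exists f1. split; [apply IHf1; lia|].
    apply in_map, IHf2; lia.
  - do 5 right; left. apply in_flat_map. exists f1. split; [apply IHf1; lia|].
    apply in_map, IHf2; lia.
  - do 6 right; left. apply in_map, IHf; lia.
  - do 7 right; left. apply in_map, IHf; lia.
  - do 8 right. apply in_flat_map. exists x. split; [apply Hseq; lia|].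
    apply in_app_iff. destruct e; [left|right]; apply in_map, IHf; lia.
Qed.

Lemma eventually_avoid u (Q : form -> Prop) L : (forall f, In f L -> Q f -> ~ inf_often u f) ->
  exists N, forall n, N <= n -> forall f, In f L -> Q f -> u n <> f.
Proof.
  induction L as [|f L IH]; intro H.
  - exists 0; intros n _ f [].
  - destruct IH as [N1 HN1]; [intros g Hg; apply H; right; auto|].
    destruct (classic (Q f)) as [Hq|Hq].
    + destruct (not_all_ex_not _ _ (H f (or_introl eq_refl) Hq)) as [N2 HN2].
      exists (max N1 N2). intros n Hn g [<-|Hg] Qg.
      * intro E. apply HN2. exists n; split; [lia|auto].
      * apply HN1; auto; lia.
    + exists N1. intros n Hn g [<-|Hg] Qg; [contradiction | apply HN1; auto].
Qed.

Lemma free_for_no_capture g y C : no_capture g C -> free_for g y C = true.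
Proof.
  unfold no_capture. induction C; simpl; intro H; auto.
  - rewrite IHC1, IHC2; auto; intros z Hz; apply H; simpl; rewrite Hz, ?orb_true_r; auto.
  - rewrite IHC1, IHC2; auto; intros z Hz; apply H; simpl; rewrite Hz, ?orb_true_r; auto.
  - destruct (Nat.eqb x y); auto. rewrite IHC, H; simpl.
    + rewrite orb_true_r; auto.
    + rewrite Nat.eqb_refl; auto.
    + intros z Hz; apply H; simpl; rewrite Hz, orb_true_r; auto.
Qed.

Lemma fsub_plug C y r : free_in y C = true -> no_capture r C -> fsub r (subst C y r).
Proof.
  intros H1 H2. apply free_sub_iff. exists C, y. repeat split; auto. apply free_for_no_capture; auto.
Qed.

Lemma subst_instance_cases C y r : no_capture r C ->
  (subst C y r = C /\ free_in y C = false) \/ fsub r (subst C y r).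
Proof.
  intro H. destruct (free_in y C) eqn:E; [right; apply fsub_plug; auto | left; auto].
  split; auto. apply subst_not_free; auto.
Qed.

Lemma fsub_subst_cases t y r C : fsub t (subst C y r) -> no_capture r C ->
  fsub t r \/ (fsub t C /\ free_in y t = false) \/ fsub r t.
Proof.
  assert (Here : forall C, no_capture r C -> t = subst C y r ->
    (fsub t C /\ free_in y t = false) \/ fsub r t).
  { intros D HB ->. destruct (subst_instance_cases D y r HB) as [[-> F]|H]; auto.
    left; split; auto. apply fsub_refl. }
  induction C as [| |p|p|v|a IHa b IHb|a IHa b IHb|a IHa|a IHa|ee z a IHa]; intros [n H] HB;
    simpl in H.
  all: try (apply fsub_at_atomic in H; right; left; subst; split; [apply fsub_refl|auto]; fail).
  - destruct (Nat.eqb_spec v y); [left; exists n; auto|].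
    apply fsub_at_atomic in H. right; left; subst; split; [apply fsub_refl|simpl; apply Nat.eqb_neq; auto].
  - assert (HBa : no_capture r a) by (intros v Hv; apply HB; simpl; rewrite Hv; auto).
    assert (HBb : no_capture r b) by (intros v Hv; apply HB; simpl; rewrite Hv, orb_true_r; auto).
    destruct (fsub_at_inv _ _ _ H) as [E|[Ha|Hb]]; [destruct (Here (FAnd a b)); auto; tauto| |].
    + destruct (IHa Ha HBa) as [?|[[[m Hm] ?]|?]]; auto. right; left; split; auto. exists (S m); apply fa_andl; auto.
    + destruct (IHb Hb HBb) as [?|[[[m Hm] ?]|?]]; auto. right; left; split; auto. exists (S m); apply fa_andr; auto.
  - assert (HBa : no_capture r a) by (intros v Hv; apply HB; simpl; rewrite Hv; auto).
    assert (HBb : no_capture r b) by (intros v Hv; apply HB; simpl; rewrite Hv, orb_true_r; auto).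
    destruct (fsub_at_inv _ _ _ H) as [E|[Ha|Hb]]; [destruct (Here (FOr a b)); auto; tauto| |].
    + destruct (IHa Ha HBa) as [?|[[[m Hm] ?]|?]]; auto. right; left; split; auto. exists (S m); apply fa_orl; auto.
    + destruct (IHb Hb HBb) as [?|[[[m Hm] ?]|?]]; auto. right; left; split; auto. exists (S m); apply fa_orr; auto.
  - destruct (fsub_at_inv _ _ _ H) as [E|Ha]; [destruct (Here (FDia a)); auto; tauto|].
    destruct (IHa Ha HB) as [?|[[[m Hm] ?]|?]]; auto. right; left; split; auto. exists (S m); apply fa_dia; auto.
  - destruct (fsub_at_inv _ _ _ H) as [E|Ha]; [destruct (Here (FBox a)); auto; tauto|].
    destruct (IHa Ha HB) as [?|[[[m Hm] ?]|?]]; auto. right; left; split; auto. exists (S m); apply fa_box; auto.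
  - destruct (Nat.eqb_spec z y) as [->|Hzy].
    + (* y is bound at the top: nothing is substituted *)
      right; left. split; [exists n; auto|].
      destruct (free_in y t) eqn:E; auto.
      pose proof (fsub_at_free _ _ _ y H E) as F; simpl in F; rewrite Nat.eqb_refl in F; discriminate.
    + assert (HBa : no_capture r a) by (intros v Hv; apply HB; simpl; rewrite Hv, orb_true_r; auto).
      destruct (fsub_at_inv _ _ _ H) as [E|[Ha Hz]].
      * assert (Et : t = subst (FFix ee z a) y r) by (simpl; destruct (Nat.eqb_spec z y); congruence).
        destruct (Here _ HB Et); tauto.
      * destruct (IHa Ha HBa) as [?|[[[m Hm] ?]|?]]; auto.
        right; left; split; auto. exists (S m); apply fa_fix; auto.
Qed.

Lemma fsub_gain t r r2 : step r r2 -> tidy r -> ~ fsub t r -> fsub t r2 -> is_fix r /\ fsub r t.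
Proof.
  intros HS Ht Hn [m Hm]. destruct HS.
  1-6: exfalso; apply Hn; exists (S m);
    solve [apply fa_andl; auto | apply fa_andr; auto | apply fa_orl; auto | apply fa_orr; auto
          | apply fa_dia; auto | apply fa_box; auto].
  split; simpl; auto.
  assert (HB : no_capture (FFix e x a) a).
  { intros z Hz. destruct (free_in z (FFix e x a)) eqn:E; auto. exfalso; apply (Ht z); split; auto.
    simpl; rewrite Hz, orb_true_r; auto. }
  destruct (fsub_subst_cases t x _ a (ex_intro _ _ Hm) HB) as [?|[[[k Hk] ?]|?]]; auto;
    exfalso; apply Hn; auto.
  exists (S k); apply fa_fix; auto.
Qed.

Lemma find_switch (P : nat -> Prop) k j : k < j -> ~ P k -> P j -> exists i, k <= i < j /\ ~ P i /\ P (S i).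
Proof.
  induction j; intros H1 H2 H3; [lia|].
  destruct (classic (P j)) as [Hj|Hj].
  - destruct (Nat.eq_dec k j) as [->|Hne]; [contradiction|].
    destruct IHj as [i [? [? ?]]]; auto; [lia|]. exists i; split; auto; lia.
  - exists j; split; auto; lia.
Qed.

Lemma trace_steps_in u t m : trace u -> (forall k, m <= k -> fsub t (u k)) ->
  forall d i, m <= i -> steps_in t (u i) (u (i + d)).
Proof.
  intros Hu H. induction d; intros i Hi.
  - rewrite Nat.add_0_r. constructor. apply free_sub_iff; auto.
  - apply si_step with (u (S i)); [apply free_sub_iff; auto | apply Hu |].
    replace (i + S d) with (S i + d) by lia. apply IHd; lia.
Qed.

(* On a tidy trace with boundedly many names, a fixpoint t of minimal size among those
   occurring infinitely often is above all of them in the closure order: eventually no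
   smaller fixpoint occurs, so once t occurs it stays a free subformula (by [fsub_gain]),
   and every later formula is reached by a trace keeping t. *)
Lemma smallest_fix_is_top u M t : trace u -> (forall n, tidy (u n)) -> (forall n, max_name (u n) <= M) ->
  is_fix t -> inf_often u t -> (forall g, is_fix g -> inf_often u g -> size t <= size g) ->
  forall s, is_fix s -> inf_often u s -> csub s t.
Proof.
  intros Hu Ht Hb Ft It Hmin s Fs Is.
  destruct (eventually_avoid u (fun f => is_fix f /\ size f < size t) (enum (size t) M)) as [N HN].
  { intros f _ [Ff Sf] If. specialize (Hmin f Ff If). lia. }
  assert (Small : forall n, N <= n -> ~ (is_fix (u n) /\ size (u n) < size t)).
  { intros n Hn [F1 S1]. apply (HN n Hn (u n)); auto. apply enum_complete; auto. lia. }
  destruct (It N) as [m [Hm Em]].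
  assert (Keep : forall k, m <= k -> fsub t (u k)).
  { intros k Hk. apply NNPP; intro Hn.
    destruct (It (S k)) as [j [Hj Ej]].
    destruct (find_switch (fun i => fsub t (u i)) k j) as [i [Hi [Hni Hsi]]];
      [lia | auto | rewrite Ej; apply fsub_refl |].
    destruct (fsub_gain _ _ _ (Hu i) (Ht i) Hni Hsi) as [Fi Oi].
    apply (Small i); [lia|]. split; auto.
    pose proof (fsub_size _ _ Oi).
    assert (u i <> t) by (intro E; apply Hni; rewrite E; apply fsub_refl).
    assert (size (u i) <> size t) by (intro E; apply H0; apply fsub_size_eq; auto).
    lia. }
  destruct (Is m) as [j [Hj Ej]].
  pose proof (trace_steps_in u t m Hu Keep (j - m) m (le_n m)) as H.
  replace (m + (j - m)) with j in H by lia. rewrite Em, Ej in H. exact H.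
Qed.

Lemma size_min_exists (P : form -> Prop) : (exists f, P f) ->
  exists f, P f /\ forall g, P g -> size f <= size g.
Proof.
  intros [f Hf].
  assert (H : forall n f, size f <= n -> P f -> exists m, P m /\ forall g, P g -> size m <= size g).
  { induction n; intros f0 Hs Hp; [pose proof (size_pos f0); lia|].
    destruct (classic (exists g, P g /\ size g < size f0)) as [[g [Hg Hlt]]|Hno].
    - apply IHn with g; auto; lia.
    - exists f0; split; auto. intros g Hg. destruct (Nat.le_gt_cases (size f0) (size g)); auto.
      exfalso; apply Hno; eauto. }
  eapply H; eauto.
Qed.

Section Unfolding.
Variables (e : fp) (x : nat) (chi : form) (x' : nat).
Local Notation xi := (FFix e x chi).
Local Notation chi' := (subst chi x (FVar x')).
Hypothesis xi_tidy : tidy xi.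
Hypothesis x_free : free_in x chi = true.
Hypothesis xi_not_in_clos_chi : ~ Clos chi xi.
Hypothesis x'_fresh : occurs x' xi = false.

Lemma x'_not_free_xi : free_in x' xi = false.
Proof. unfold occurs in x'_fresh. split_bool; auto. Qed.

Lemma x'_not_bound_xi : bound_in x' xi = false.
Proof. unfold occurs in x'_fresh. split_bool; auto. Qed.

Lemma x'_ne_x : x' <> x.
Proof.
  intro E. pose proof x'_not_bound_xi as H. simpl in H. rewrite E, Nat.eqb_refl in H; discriminate.
Qed.

Lemma x'_not_bound_chi : bound_in x' chi = false.
Proof. pose proof x'_not_bound_xi as H. simpl in H. split_bool; auto. Qed.

Lemma x'_not_free_chi : free_in x' chi = false.
Proof.
  pose proof x'_not_free_xi as H. simpl in H.
  destruct (Nat.eqb_spec x' x); [exfalso; apply x'_ne_x; auto|]. auto.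
Qed.

Lemma bound_chi_not_free z : bound_in z chi = true -> free_in z xi = false.
Proof.
  intro Hb. destruct (free_in z xi) eqn:E; auto. exfalso; apply (xi_tidy z); split; auto.
  simpl; rewrite Hb, orb_true_r; auto.
Qed.

Lemma clos_bound r z : Clos chi' r -> bound_in z r = true -> bound_in z chi = true.
Proof.
  intros H Hb. apply (steps_bound _ _ _ H) in Hb.
  destruct (bound_in_subst_inv _ _ _ _ Hb); auto. discriminate.
Qed.

Lemma clos_x'_not_bound r : Clos chi' r -> bound_in x' r = false.
Proof.
  intro H. destruct (bound_in x' r) eqn:E; auto.
  pose proof x'_not_bound_chi as Hchi. rewrite (clos_bound r x' H E) in Hchi; auto.
Qed.

Lemma clos_no_capture r : Clos chi' r -> no_capture xi r.
Proof. intros H z Hz. apply bound_chi_not_free. eapply clos_bound; eauto. Qed.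

Lemma clos_abstracts r : Clos chi' r -> exists a, Clos chi a /\ abstracts x' a r.
Proof.
  intro H. pattern r; apply (steps_ind_last _ chi'); auto.
  - exists chi; split; [apply rt_refl|apply abstracts_rename].
  - intros b c Hb [a [Ha HR]] Hs.
    destruct (abstracts_step _ _ _ _ HR (clos_x'_not_bound _ Hb) Hs) as [a2 [? ?]].
    exists a2; split; auto. eapply steps_snoc; eauto.
Qed.

Lemma clos_not_sub_xi r : Clos chi' r -> ~ sub xi r.
Proof.
  intros H Hs. destruct (clos_abstracts r H) as [a [Ha HR]].
  assert (Hsa : sub xi a) by (eapply abstracts_sub; eauto; [apply x'_not_free_xi|apply x'_not_bound_xi]).
  apply xi_not_in_clos_chi. eapply rt_trans; [eauto|]. apply fsub_reach, sub_fsub; auto.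
  intros z Hz. apply bound_chi_not_free. eapply steps_bound; eauto.
Qed.

Lemma clos_admissible r : Clos chi' r -> admissible x' xi r.
Proof. split; [apply clos_x'_not_bound | apply clos_not_sub_xi]; auto. Qed.

Lemma chi'_tidy : tidy chi'.
Proof.
  intros v [HF HB]. apply (clos_bound chi' v (rt_refl _ _ _)) in HB.
  destruct (free_in_subst_inv _ _ _ _ HF) as [[H1 H2]|H1].
  - pose proof (bound_chi_not_free v HB) as H3. simpl in H3.
    destruct (Nat.eqb_spec v x); [congruence|]. simpl in H3. congruence.
  - simpl in H1. apply Nat.eqb_eq in H1; subst. rewrite x'_not_bound_chi in HB; discriminate.
Qed.

Lemma clos_chi'_tidy r : Clos chi' r -> tidy r.
Proof. intro H. exact (steps_tidy _ _ chi'_tidy H). Qed.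

Lemma clos_xi_tidy r : Clos xi r -> tidy r.
Proof. intro H. exact (steps_tidy _ _ xi_tidy H). Qed.

Lemma subst_chi' : subst chi' x' xi = subst chi x xi.
Proof. apply subst_rename; [apply x'_not_free_chi | apply x'_not_bound_chi]. Qed.

(* x' itself is in Clos chi', being a free subformula of chi'. *)
Lemma x'_in_clos : Clos chi' (FVar x').
Proof.
  apply fsub_reach, fsub_of_free, free_in_subst_plug; auto.
  - apply x'_not_bound_chi.
  - simpl; apply Nat.eqb_refl.
Qed.

Lemma clos_step_subst r s : Clos chi' r -> step r s -> step (subst r x' xi) (subst s x' xi).
Proof. intros H Hs. apply step_subst; auto; [apply clos_x'_not_bound | apply clos_no_capture]; auto. Qed.

Lemma clos_step_subst_inv r s : Clos chi' r -> r <> FVar x' ->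
  step (subst r x' xi) s -> exists q, step r q /\ s = subst q x' xi.
Proof.
  intros H Hr Hs. apply step_subst_inv; auto; [apply clos_x'_not_bound | apply clos_no_capture]; auto.
Qed.

Lemma clos_image r : Clos chi' r -> Clos xi (subst r x' xi).
Proof.
  intro H. pattern r; apply (steps_ind_last _ chi'); auto.
  - rewrite subst_chi'. apply rt_step. constructor.
  - intros b c Hb IH Hs. eapply steps_snoc; eauto. apply clos_step_subst; auto.
Qed.

Lemma clos_inj a b : Clos chi' a -> Clos chi' b -> subst a x' xi = subst b x' xi -> a = b.
Proof. intros Ha Hb. apply subst_inj; apply clos_admissible; auto. Qed.

Lemma clos_surj r : Clos xi r -> exists phi, Clos chi' phi /\ subst phi x' xi = r.
Proof.
  intro H. pattern r; apply (steps_ind_last _ xi); auto.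
  - exists (FVar x'). split; [apply x'_in_clos|]. simpl; rewrite Nat.eqb_refl; auto.
  - intros b c Hb [phi [Hphi <-]] Hs.
    destruct (isvar_dec phi x') as [->|Hn].
    + (* the image of x' is xi, which unfolds to the image of chi' *)
      simpl in Hs. rewrite Nat.eqb_refl in Hs. inversion Hs; subst.
      exists chi'. split; [apply rt_refl | apply subst_chi'].
    + destruct (clos_step_subst_inv _ _ Hphi Hn Hs) as [q [Hq ->]].
      exists q; split; auto. eapply steps_snoc; eauto.
Qed.

Lemma clos_step_iff phi psi : Clos chi' phi -> Clos chi' psi -> phi <> FVar x' ->
  (step phi psi <-> step (subst phi x' xi) (subst psi x' xi)).
Proof.
  intros H1 H2 Hn. split; [apply clos_step_subst; auto|].
  intro Hs. destruct (clos_step_subst_inv _ _ H1 Hn Hs) as [q [Hq E]].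
  assert (q = psi) by (apply clos_inj; [exact (steps_snoc _ _ _ H1 Hq) | auto | congruence]).
  subst; auto.
Qed.

Lemma clos_fsub_iff phi psi : Clos chi' phi -> Clos chi' psi -> free_in x' phi = true ->
  (free_sub phi psi <-> free_sub (subst phi x' xi) (subst psi x' xi)).
Proof.
  intros H1 H2 F. rewrite !free_sub_iff. split.
  - intros [n H]. eapply fsub_subst; eauto; [apply clos_x'_not_bound | apply clos_no_capture]; auto.
  - apply fsub_subst_inv; auto; apply clos_admissible; auto.
Qed.

(* Part (4) rests on transporting traces along which phi stays a free subformula. *)
Lemma steps_in_subst phi r s : Clos chi' phi -> free_in x' phi = true ->
  steps_in phi r s -> Clos chi' r -> steps_in (subst phi x' xi) (subst r x' xi) (subst s x' xi).
Proof.
  intros Hp F H. induction H as [r Hr|r s t Hr Hs Hst IH]; intro Hc.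
  - constructor. apply (clos_fsub_iff phi r); auto.
  - apply si_step with (subst s x' xi).
    + apply (clos_fsub_iff phi r); auto.
    + apply clos_step_subst; auto.
    + apply IH. eapply steps_snoc; eauto.
Qed.

Lemma steps_in_subst_inv phi : Clos chi' phi -> is_fix phi -> free_in x' phi = true ->
  forall a b, steps_in (subst phi x' xi) a b ->
  forall r s, Clos chi' r -> Clos chi' s -> a = subst r x' xi -> b = subst s x' xi ->
  steps_in phi r s.
Proof.
  intros Hp Fix F a b H. induction H as [a Ha|a c t Ha Hs Hst IH]; intros r s Hr Hs' Er Es.
  - assert (r = s) by (apply clos_inj; congruence). subst.
    constructor. apply (clos_fsub_iff phi s); auto.
  - subst. assert (Hfs : free_sub phi r) by (apply (clos_fsub_iff phi r); auto).
    assert (Hn : r <> FVar x').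
    { intros ->. apply free_sub_iff, fsub_var in Hfs. subst phi. contradiction. }
    destruct (clos_step_subst_inv _ _ Hr Hn Hs) as [q [Hq ->]].
    apply si_step with q; auto. apply IH; auto. exact (steps_snoc _ _ _ Hr Hq).
Qed.

Lemma clos_csub_iff phi psi : Clos chi' phi -> Clos chi' psi -> is_fix phi ->
  (csub psi phi <-> csub (subst psi x' xi) (subst phi x' xi)).
Proof.
  intros H1 H2 Fix. unfold csub. destruct (free_in x' phi) eqn:F.
  - split; intro H.
    + apply steps_in_subst; auto.
    + eapply steps_in_subst_inv; eauto.
  - (* phi and everything it reaches are fixed by the substitution *)
    rewrite (subst_not_free phi); auto.
    assert (Hpsi : steps phi psi \/ steps phi (subst psi x' xi) -> free_in x' psi = false).
    { intros [H|H]; destruct (free_in x' psi) eqn:E; auto.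
      - rewrite (steps_free _ _ _ H E) in F; auto.
      - exfalso. apply (clos_not_sub_xi (subst psi x' xi)).
        + exact (rt_trans _ _ _ _ _ H1 H).
        + apply sub_subst_free; auto. }
    split; intro H; pose proof (steps_in_steps _ _ _ H) as Hst.
    + rewrite subst_not_free; auto.
    + rewrite subst_not_free in H; auto.
Qed.

Lemma clos_chain_iff l : Forall (fun a => Clos chi' a /\ is_fix a) l ->
  (alt_chain l <-> alt_chain (map (fun a => subst a x' xi) l)).
Proof.
  induction l as [|a l IH]; intro HF; simpl; [tauto|].
  inversion HF as [|? ? [Ha Fa] HF']; subst.
  destruct (subst_fix x' xi a Fa) as [Fa' Ta'].
  assert (T1 : tidy a) by (apply clos_chi'_tidy; auto).
  assert (T2 : tidy (subst a x' xi)) by (apply clos_xi_tidy, clos_image; auto).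
  destruct l as [|b l]; simpl; [tauto|].
  inversion HF' as [|? ? [Hb Fb] _]; subst.
  destruct (subst_fix x' xi b Fb) as [Fb' Tb'].
  specialize (IH HF'). simpl in IH. rewrite Ta', Tb' in *.
  unfold csub_strict in *. rewrite <- (clos_csub_iff b a), <- (clos_csub_iff a b); auto. tauto.
Qed.

(* A fixpoint below the image of a fixpoint of Clos chi' is the image of one: the only
   other candidate, xi = x'[xi/x'], would make x' a free subformula of a fixpoint. *)
Lemma csub_image_pre q c : Clos chi' q -> is_fix q -> is_fix c -> csub c (subst q x' xi) ->
  exists p, (Clos chi' p /\ is_fix p) /\ subst p x' xi = c.
Proof.
  intros Hq Fq Fc H.
  destruct (clos_surj c) as [p [Hp <-]].
  { eapply rt_trans; [apply clos_image, Hq | apply (steps_in_steps _ _ _ H)]. }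
  exists p; split; auto. split; auto.
  apply (subst_fix_inv x' xi); auto. intros ->.
  apply (proj2 (clos_csub_iff q (FVar x') Hq x'_in_clos Fq)) in H.
  apply steps_in_last, free_sub_iff, fsub_var in H. subst q. contradiction.
Qed.

Lemma chain_pre phi : Clos chi' phi -> is_fix phi -> forall l,
  alt_chain (l ++ [subst phi x' xi]) ->
  Forall (fun b => exists q, (Clos chi' q /\ is_fix q) /\ subst q x' xi = b) (l ++ [subst phi x' xi]).
Proof.
  intros Hp Fp l. induction l as [|c l IH]; intro H.
  - constructor; [exists phi; auto|constructor].
  - pose proof (IH (alt_chain_tail _ _ H)) as Ht. simpl. constructor; auto.
    destruct (l ++ [subst phi x' xi]) as [|d l'] eqn:E; [destruct l; discriminate|].
    simpl in H; rewrite E in H. destruct H as [_ [Fc [[Hcs _] _]]].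
    inversion Ht as [|? ? [q [[Hq Fq] <-]] _]; subst.
    apply (csub_image_pre q); auto.
Qed.

Lemma clos_h_down phi : Clos chi' phi -> is_fix phi -> h_down phi = h_down (subst phi x' xi).
Proof.
  intros Hp Fp. unfold h_down. f_equal. apply functional_extensionality; intro n.
  apply propositional_extensionality. split.
  - intros [l [Hl Hn]]. exists (map (fun a => subst a x' xi) l).
    assert (HF : Forall (fun a => Clos chi' a /\ is_fix a) (l ++ [phi])).
    { pose proof (chain_reach _ _ Hl) as H1. pose proof (alt_chain_fix _ Hl) as H2.
      rewrite Forall_forall in *. intros b Hb. split; [exact (rt_trans _ _ _ _ _ Hp (H1 b Hb)) | auto]. }
    apply (clos_chain_iff _ HF) in Hl. rewrite map_app in Hl.
    split; auto. rewrite length_app, length_map; rewrite length_app in Hn; auto.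
  - intros [l [Hl Hn]].
    pose proof (chain_pre phi Hp Fp l Hl) as HF. apply Forall_app in HF as [HF _].
    destruct (Forall_preimage _ _ _ HF) as [lp [HFp <-]].
    exists lp. split.
    + apply (clos_chain_iff (lp ++ [phi])); [apply Forall_app; auto | rewrite map_app; exact Hl].
    + rewrite length_app, length_map in Hn. rewrite length_app; auto.
Qed.

(* Part (6): the fixpoints occurring infinitely often on the image trace are the images of
   those on the original; the smallest one on each side is the closure-order top, and the
   substitution preserves its type. *)
Lemma clos_winner t : (forall n, Clos chi' (t n)) -> trace t ->
  winner t = winner (fun n => subst (t n) x' xi).
Proof.
  intros Hc Tr. set (t' := fun n => subst (t n) x' xi).
  assert (Tr' : trace t') by (intro n; apply clos_step_subst; auto).
  assert (Ti : forall n, tidy (t n)) by (intro n; apply clos_chi'_tidy; auto).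
  assert (Ti' : forall n, tidy (t' n)) by (intro n; apply clos_xi_tidy, clos_image; auto).
  assert (Names : forall n, max_name (t n) <= max_name chi') by (intro n; apply max_name_steps, Hc).
  assert (Img : forall s, inf_often t s -> inf_often t' (subst s x' xi))
    by (intros s Is N; destruct (Is N) as [n [? <-]]; exists n; auto).
  assert (Pre : forall g, is_fix g -> inf_often t' g ->
                exists s, is_fix s /\ inf_often t s /\ subst s x' xi = g).
  { intros g Fg Ig. destruct (Ig 0) as [n0 [_ E0]]. exists (t n0).
    assert (Hn : t n0 <> FVar x') by (intro E; pose proof (Tr n0) as S0; rewrite E in S0; inversion S0).
    split; [apply (subst_fix_inv x' xi); auto; unfold t' in E0; rewrite E0; auto | split; auto].
    intros N. destruct (Ig N) as [n [Hn' En]]. exists n; split; auto.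
    apply clos_inj; auto. unfold t' in *. congruence. }
  assert (Equiv : exists_wins t <-> exists_wins t').
  { destruct (classic (exists f, is_fix f /\ inf_often t f)) as [Hex|Hno].
    - destruct (size_min_exists _ Hex) as [tau [[Ftau Itau] Hmin]].
      assert (Top := smallest_fix_is_top t _ tau Tr Ti Names Ftau Itau
                       (fun g Fg Ig => Hmin g (conj Fg Ig))).
      assert (Ctau : Clos chi' tau) by (destruct (Itau 0) as [n [_ <-]]; auto).
      destruct (subst_fix x' xi tau Ftau) as [Ftau' Ttau'].
      rewrite (exists_wins_top t tau Tr Ti Ftau Itau Top).
      rewrite (exists_wins_top t' (subst tau x' xi) Tr' Ti' Ftau' (Img _ Itau)), Ttau'; [tauto|].
      intros g Fg Ig. destruct (Pre g Fg Ig) as [s [Fs [Is <-]]].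
      apply (clos_csub_iff tau s); auto. destruct (Is 0) as [n [_ <-]]; auto.
    - split; intros [g [Fg [Ig _]]]; exfalso; apply Hno; [eauto|].
      destruct (Pre g Fg Ig) as [s [Fs [Is _]]]; eauto. }
  unfold winner. fold t'.
  destruct (excluded_middle_informative (exists_wins t)), (excluded_middle_informative (exists_wins t'));
    tauto.
Qed.

End Unfolding.

Theorem mainTheorem8 (e : fp) (x : nat) (chi : form) (x' : nat) :
  let xi := FFix e x chi in
  let chi' := subst chi x (FVar x') in
  tidy xi -> free_in x chi = true -> ~ Clos chi xi ->
  occurs x' xi = false ->
  tidy chi' /\
  (* (1) bijection Clos chi' -> Clos xi *)
  ((forall phi, Clos chi' phi -> Clos xi (subst phi x' xi)) /\
   (forall phi psi, Clos chi' phi -> Clos chi' psi ->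
      subst phi x' xi = subst psi x' xi -> phi = psi) /\
   (forall rho, Clos xi rho -> exists phi, Clos chi' phi /\ subst phi x' xi = rho)) /\
  (forall phi psi, Clos chi' phi -> Clos chi' psi ->
    (* (2) *)
    (phi <> FVar x' ->
       (step phi psi <-> step (subst phi x' xi) (subst psi x' xi)) /\
       Ln phi = Ln (subst phi x' xi)) /\
    (* (3) *)
    (free_in x' phi = true ->
       (free_sub phi psi <-> free_sub (subst phi x' xi) (subst psi x' xi))) /\
    (* (4) *)
    (is_fix phi -> is_fix psi ->
       (csub psi phi <-> csub (subst psi x' xi) (subst phi x' xi)))) /\
  (* (5) *)
  (forall phi, Clos chi' phi -> is_fix phi -> h_down phi = h_down (subst phi x' xi)) /\
  (* (6) *)
  (forall t : nat -> form, (forall n, Clos chi' (t n)) -> (forall n, step (t n) (t (S n))) ->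
     winner t = winner (fun n => subst (t n) x' xi)).
Proof.
  intros xi chi' Htidy Hx Hnot Hfresh. subst xi chi'.
  split; [exact (chi'_tidy _ _ _ _ Htidy Hfresh)|].
  split; [split; [|split] | split; [|split]].
  - intros phi Hphi. apply clos_image; auto.
  - intros phi psi Hphi Hpsi. apply clos_inj; auto.
  - intros rho Hrho. apply clos_surj; auto.
  - intros phi psi Hphi Hpsi. split; [|split].
    + intro Hn. split; [apply clos_step_iff | apply Ln_subst]; auto.
    + intro F. apply clos_fsub_iff; auto.
    + intros Fphi _. apply clos_csub_iff; auto.
  - intros phi Hphi Fphi. apply clos_h_down; auto.
  - intros t Ht Tr. apply clos_winner; auto.
Qed.
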